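(* Let $N$ be a finite group, let $\chi\in\operatorname{Irr}(N)$ with $\operatorname Z(N)\subseteq\ker\chi$, and let $A$ be a subgroup of $\operatorname{Aut}(N)$ containing the group of inner automorphisms $\operatorname{Inn}(N)\cong N/\operatorname Z(N)$. Regard $\chi$ as a character of $\operatorname{Inn}(N)$ and assume it extends to its stabilizer $A_\chi$ in $A$. Then for every finite group $G$ with $N\trianglelefteq G$ such that the image of $G$ in $\operatorname{Aut}(N)$ (via conjugation) is contained in $A$, the character $\chi$ extends to its stabilizer $G_\chi$. *)

From HB Require Import structures.
From mathcomp Require Import all_boot all_order all_algebra all_fingroup all_solvable all_field all_character.
Set Implicit Arguments. Unset Strict Implicit. Unset Printing Implicit Defensive.
Import GRing.Theory Num.Theory.
Local Open Scope group_scope.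

Definition Inn (gT : finGroupType) (N : {group gT}) : {group {perm gT}} :=
  (conj_aut N @* N)%G.

Definition stab (gT : finGroupType) (G H : {group gT}) (phi : 'CF(H))
  : {group gT} := (G :&: inertia_group phi)%G.

Definition extends_to (gT : finGroupType) (N H : {group gT}) (phi : 'CF(N)) :=
  exists2 psi : 'CF(H), psi \is a character & ('Res[N] psi)%R = phi.

From HB Require Import structures.
From mathcomp Require Import all_boot all_order all_algebra all_fingroup all_solvable all_field all_character.
Set Implicit Arguments. Unset Strict Implicit. Unset Printing Implicit Defensive.
Import GRing.Theory Num.Theory.
Local Open Scope group_scope.

(* Write f := conj_aut N : 'N(N) -> Aut N, whose image of N is
   Inn(N) and whose kernel 'C(N) contains 'Z(N), and let theta be chi viewed
   on Inn(N), i.e. chi = cfMorph theta.  Put H := G_chi.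
   - Conjugation commutes with cfMorph, so f maps the stabilizer of
     cfMorph theta in G onto the stabilizer of theta in f(G) (library lemma
     inertia_morph_im); as f(G) <= A, we get Inn(N) <= f(H) <= A_theta.
   - Extensions restrict: the extension of theta to A_theta restricts to an
     extension of theta to f(H).
   - Extensions pull back along morphisms: composing an extension psi of
     theta to f(H) with f gives a character of H restricting to
     cfMorph theta = chi on N. *)

Lemma sub_stab (gT : finGroupType) (N G : {group gT}) (phi : 'CF(N)) :
  N \subset G -> N \subset stab G phi.
Proof. by move=> sNG; rewrite subsetI sNG sub_inertia. Qed.

Lemma extends_to_sub (gT : finGroupType) (N K S : {group gT}) (phi : 'CF(N)) :
  N \subset K -> K \subset S -> extends_to S phi -> extends_to K phi.
Proof.
move=> sNK sKS [psi Cpsi <-].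
exists ('Res[K] psi)%R; first exact: cfRes_char.
exact: cfResRes.
Qed.

Section ExtensionsAlongMorphisms.

Variables (aT rT : finGroupType) (D : {group aT}) (f : {morphism D >-> rT}).

Lemma morphim_stab (N G : {group aT}) (phi : 'CF(f @* N)) :
  N <| G -> G \subset D -> f @* stab G (cfMorph phi) = stab (f @* G)%G phi.
Proof. exact: inertia_morph_im. Qed.

Lemma cfMorph_extends_to (N H : {group aT}) (phi : 'CF(f @* N)) :
    N \subset H -> H \subset D ->
  extends_to (f @* H)%G phi -> extends_to H (cfMorph phi).
Proof.
move=> sNH sHD [psi Cpsi Rpsi].
exists (cfMorph psi); first exact: cfMorph_char.
by rewrite cfResMorph // Rpsi.
Qed.

End ExtensionsAlongMorphisms.

Theorem lemma2p4 (gT : finGroupType) (N : {group gT}) (chi : 'CF(N))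
    (A : {group {perm gT}}) (theta : 'CF(Inn N)) :
  chi \in irr N ->
  'Z(N) \subset cfker chi ->
  A \subset Aut N ->
  Inn N \subset A ->
  (* theta is chi regarded as a character of Inn(N) = N / Z(N) *)
  @cfMorph gT _ 'N(N) (conj_aut N) N theta = chi ->
  extends_to (stab A theta) theta ->
  forall G : {group gT},
    N <| G ->
    conj_aut N @* G \subset A ->
    extends_to (stab G chi) chi.
Proof.
move=> _ _ _ _ <- extA G nsNG sfGA; have /andP[sNG nNG] := nsNG.
set H := stab G _.
have sNH : N \subset H by exact: sub_stab.
have sHD : H \subset 'N(N) by exact: subset_trans (subsetIl _ _) nNG.
apply: cfMorph_extends_to => //.
have sInnH : Inn N \subset conj_aut N @* H by exact: morphimS.
have sHA : conj_aut N @* H \subset stab A theta.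
  have -> : conj_aut N @* H = stab (conj_aut N @* G)%G theta.
    exact: morphim_stab.
  exact: setSI.
exact: extends_to_sub sInnH sHA extA.
Qed.
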